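(* Let $r_1,r_2,r_3$ be pairwise distinct odd positive integers such that for every $i\in[3]$, $r_i\notin\{1,\lfloor (r_1+r_2+r_3)/2\rfloor,\lceil (r_1+r_2+r_3)/2\rceil\}$. Let $G=K_{r_1,r_2,r_3}$ be the complete 3-partite graph with part sizes $r_1,r_2,r_3$. Then for every bisection $H$ of $G$ there exists a vertex $v\in V(G)$ with $d_H(v)<(d_G(v)-1)/2$.
   Context: A bisection of a graph $G$ is a bipartite spanning subgraph $H$ of $G$ with a bipartition into two partition sets (every edge of $H$ joining the two sets) whose sizes differ by at most one. $d_G(v)$ denotes the degree of $v$ in $G$. *)

From mathcomp Require Import all_boot.
Set Implicit Arguments. Unset Strict Implicit. Unset Printing Implicit Defensive.

(* Vertices of K_{r1,r2,r3}: 'I_(r1+r2+r3); vertex v lies in part 0 if v < r1,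
   part 1 if r1 <= v < r1+r2, part 2 otherwise. *)
Definition part (r1 r2 : nat) (v : nat) : nat :=
  if v < r1 then 0 else if v < r1 + r2 then 1 else 2.

Arguments part : clear implicits.
Definition K3 (r1 r2 r3 : nat) : rel 'I_(r1 + r2 + r3) :=
  fun u v => part r1 r2 u != part r1 r2 v.

Definition deg (T : finType) (e : rel T) (v : T) : nat := #|[set u | e v u]|.

Definition is_bisection (T : finType) (G H : rel T) : Prop :=
  (forall u v, H u v -> G u v) /\
  (forall u v, H u v = H v u) /\
  exists A : {set T},
    #|A| <= #|~: A| + 1 /\ #|~: A| <= #|A| + 1 /\
    (forall u v, H u v -> (u \in A) != (v \in A)).
Arguments K3 : clear implicits.

(* Assume to the contrary that 2 d_H(v) + 1 >= d_G(v) for every vertex v, and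
   let A, B be the sides of the bisection; as n = r1 + r2 + r3 is odd,
   d := |A| - |B| is 1 or -1.  A vertex in a part P and in A has all its
   H-neighbours in B \ P, and symmetrically for B.  So if P meets both sides,
   these two bounds and the parity of n - |P| force |A \ P| = |B \ P|, i.e. the
   excess |P ∩ A| - |P ∩ B| of P equals d; otherwise P lies on one side and its
   excess is ±|P|.  As the three excesses sum to d, counting how many parts
   have excess d yields r_i = 1, r_i = r_j, or r_i ∈ {⌊n/2⌋, ⌈n/2⌉}. *)

From mathcomp Require Import all_boot ssralg ssrint zify.

Set Implicit Arguments.
Unset Strict Implicit.
Unset Printing Implicit Defensive.

Lemma card_ord_lt n k : k <= n -> #|[set u : 'I_n | u < k]| = k.
Proof.
by move=> le_kn; rewrite -sum1dep_card (big_ord_narrow le_kn) sum1_card card_ord.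
Qed.

Lemma deg_le_cross (T : finType) (G H : rel T) (S : {set T}) v :
  (forall u w, H u w -> G u w) -> (forall u w, H u w -> (u \in S) != (w \in S)) ->
  v \in S -> deg H v <= #|~: S :&: [set u | G v u]|.
Proof.
move=> subHG sepS vS; apply/subset_leq_card/subsetP => u; rewrite !inE => Hvu.
by rewrite subHG // andbT; have := sepS _ _ Hvu; rewrite vS.
Qed.

Lemma balanced_of_cross_bounds n r a b ai bi : odd n -> odd r ->
  a + b = n -> ai + bi = r -> ai <= a -> bi <= b ->
  n - r <= (b - bi).*2 + 1 -> n - r <= (a - ai).*2 + 1 -> a + bi = b + ai.
Proof.
move=> odd_n odd_r; rewrite -(odd_double_half n) -(odd_double_half r) odd_n odd_r.
by move: n./2 r./2 => k m; lia.
Qed.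

Definition excess (T : finType) (A S : {set T}) : int :=
  (#|A :&: S|%:Z - #|~: A :&: S|%:Z)%R.

Lemma excess_setT_odd (T : finType) (A : {set T}) : odd #|T| ->
  #|A| <= #|~: A| + 1 -> #|~: A| <= #|A| + 1 ->
  (excess A [set: T] = 1 \/ excess A [set: T] = -1)%R.
Proof.
rewrite /excess !setIT -(cardsC A) => odd_T.
have := odd_double_half (#|A| + #|~: A|); rewrite odd_T.
by move: (#|A| + #|~: A|)./2 #|A| #|~: A| => h a b; lia.
Qed.

Section CompleteTripartite.

Variables r1 r2 r3 : nat.
Local Notation n := (r1 + r2 + r3).
Local Notation V := 'I_n.

Definition part_set (i : nat) : {set V} := [set v : V | part r1 r2 v == i].

Lemma K3_nbhd (v : V) : [set u | K3 r1 r2 r3 v u] = ~: part_set (part r1 r2 v).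
Proof. by apply/setP => u; rewrite !inE eq_sym. Qed.

Lemma card_part_sets :
  [/\ #|part_set 0| = r1, #|part_set 1| = r2 & #|part_set 2| = r3].
Proof.
have sub12 : [set u : V | u < r1] \subset [set u : V | u < r1 + r2].
  by apply/subsetP => u; rewrite !inE => /leq_trans->; rewrite ?leq_addr.
have -> : part_set 0 = [set u : V | u < r1].
  by apply/setP => u; rewrite !inE /part; case: ltnP => // _; case: ltnP.
have -> : part_set 1 = [set u : V | u < r1 + r2] :\: [set u : V | u < r1].
  by apply/setP => u; rewrite !inE /part; case: ltnP => h1; case: ltnP => h2 //; lia.
have -> : part_set 2 = ~: [set u : V | u < r1 + r2].
  by apply/setP => u; rewrite !inE /part; case: ltnP => h1; case: ltnP => h2 //; lia.
have le1 : r1 <= n by rewrite -addnA leq_addr.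
have := cardsC [set u : V | u < r1 + r2].
rewrite cardsDS // card_ord !card_ord_lt ?leq_addr //.
by move: #|_| => c; split; lia.
Qed.

Lemma deg_K3 (v : V) : deg (K3 r1 r2 r3) v = n - #|part_set (part r1 r2 v)|.
Proof. by rewrite /deg K3_nbhd cardsCs setCK card_ord. Qed.

Lemma card_split_parts (S : {set V}) :
  #|S| = #|S :&: part_set 0| + #|S :&: part_set 1| + #|S :&: part_set 2|.
Proof.
have S1 : (S :\: part_set 0) :&: part_set 1 = S :&: part_set 1.
  by apply/setP => u; rewrite !inE /part; case: ltnP; case: ltnP; case: (u \in S).
have S2 : (S :\: part_set 0) :\: part_set 1 = S :&: part_set 2.
  by apply/setP => u; rewrite !inE /part; case: ltnP; case: ltnP; case: (u \in S).
by rewrite -(cardsID (part_set 0) S) -(cardsID (part_set 1) (S :\: _)) S1 S2 addnA.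
Qed.

Lemma excess_split_parts (A : {set V}) :
  (excess A [set: V] = excess A (part_set 0) + excess A (part_set 1)
                       + excess A (part_set 2))%R.
Proof. by rewrite /excess !setIT (card_split_parts A) (card_split_parts (~: A)); lia. Qed.

Section Bisection.

Variable H : rel V.
Hypothesis sub_H : forall u v, H u v -> K3 r1 r2 r3 u v.
Hypothesis deg_H_large : forall v, deg (K3 r1 r2 r3) v <= (deg H v).*2 + 1.

Lemma cross_bound (S : {set V}) i :
  (forall u v, H u v -> (u \in S) != (v \in S)) -> S :&: part_set i != set0 ->
  n - #|part_set i| <= (#|~: S| - #|~: S :&: part_set i|).*2 + 1.
Proof.
move=> sep_S /set0Pn[v]; rewrite !inE => /andP[vS /eqP pv].
rewrite -pv -deg_K3 -cardsD; apply: leq_trans (deg_H_large v) _.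
rewrite leq_add2r leq_double setDE -K3_nbhd.
exact: deg_le_cross.
Qed.

Lemma part_excess_cases (A : {set V}) i :
  (forall u v, H u v -> (u \in A) != (v \in A)) -> odd n -> odd #|part_set i| ->
  excess A (part_set i) = excess A [set: V] \/
  absz (excess A (part_set i)) = #|part_set i|.
Proof.
move=> sep_A odd_n odd_P.
have sep_CA u v : H u v -> (u \in ~: A) != (v \in ~: A).
  by rewrite !inE => /sep_A; case: (u \in A); case: (v \in A).
have eP : #|A :&: part_set i| + #|~: A :&: part_set i| = #|part_set i|.
  by rewrite -(cardsID A (part_set i)) setDE !(setIC (part_set i)).
have eV : #|A| + #|~: A| = n by rewrite cardsC card_ord.
have leA := subset_leq_card (subsetIl A (part_set i)).
have leCA := subset_leq_card (subsetIl (~: A) (part_set i)).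
rewrite /excess !setIT.
case: (posnP #|A :&: part_set i|) => [A0|]; first by right; lia.
case: (posnP #|~: A :&: part_set i|) => [CA0|]; first by right; lia.
rewrite !card_gt0 => /(cross_bound sep_CA); rewrite setCK => boundCA.
move=> /(cross_bound sep_A) boundA; left.
have := balanced_of_cross_bounds odd_n odd_P eV eP leA leCA boundA boundCA.
lia.
Qed.

End Bisection.

End CompleteTripartite.

Lemma balanced_part_contra (r r' : nat) (d e e' : int) :
  1 < r -> 1 < r' -> r != r' -> (d = 1 \/ d = -1)%R ->
  e = d \/ absz e = r -> e' = d \/ absz e' = r' -> (e + e' = 0)%R -> False.
Proof. by move=> ? ? /eqP ? [] ? [] ? [] ? ?; lia. Qed.

Lemma unbalanced_parts_contra (r1 r2 r3 : nat) (d e1 e2 e3 : int) :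
  let n := r1 + r2 + r3 in
  0 < r1 -> 0 < r2 -> 0 < r3 ->
  r1.*2.+1 != n -> r2.*2.+1 != n -> r3.*2.+1 != n ->
  r1.*2 != n.+1 -> r2.*2 != n.+1 -> r3.*2 != n.+1 -> (d = 1 \/ d = -1)%R ->
  absz e1 = r1 -> absz e2 = r2 -> absz e3 = r3 -> (e1 + e2 + e3 = d)%R -> False.
Proof. by move=> n ? ? ? /eqP ? /eqP ? /eqP ? /eqP ? /eqP ? /eqP ? [] ? ? ? ? ?; lia. Qed.

Lemma excluded_size n r : odd n -> odd r -> r \notin [:: 1; n./2; uphalf n] ->
  [/\ 1 < r, r.*2.+1 != n & r.*2 != n.+1].
Proof.
rewrite !inE uphalf_half => odd_n odd_r; rewrite odd_n.
rewrite -{1 2 3 4}(odd_double_half n) -(odd_double_half r) odd_n odd_r.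
move: n./2 r./2 => h k; rewrite !negb_or => /and3P[/eqP ? /eqP ? /eqP ?].
by split; apply/eqP; lia.
Qed.

Lemma no_excess_decomposition (r1 r2 r3 : nat) (d e1 e2 e3 : int) :
  let n := r1 + r2 + r3 in
  odd r1 -> odd r2 -> odd r3 -> r1 != r2 -> r1 != r3 -> r2 != r3 ->
  r1 \notin [:: 1; n./2; uphalf n] -> r2 \notin [:: 1; n./2; uphalf n] ->
  r3 \notin [:: 1; n./2; uphalf n] -> (d = 1 \/ d = -1)%R ->
  e1 = d \/ absz e1 = r1 -> e2 = d \/ absz e2 = r2 -> e3 = d \/ absz e3 = r3 ->
  (e1 + e2 + e3 = d)%R -> False.
Proof.
move=> n o1 o2 o3 d12 d13 d23 x1 x2 x3 hd h1 h2 h3 sum_e.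
have odd_n : odd n by rewrite !oddD o1 o2 o3.
have [g1 f1 c1] := excluded_size odd_n o1 x1.
have [g2 f2 c2] := excluded_size odd_n o2 x2.
have [g3 f3 c3] := excluded_size odd_n o3 x3.
case: h1 => [e1d|a1].
  by apply: (balanced_part_contra g2 g3 d23 hd h2 h3); clear -sum_e e1d; lia.
case: h2 => [e2d|a2].
  by apply: (balanced_part_contra g1 g3 d13 hd (or_intror a1) h3); clear -sum_e e2d; lia.
case: h3 => [e3d|a3].
  apply: (balanced_part_contra g1 g2 d12 hd (or_intror a1) (or_intror a2)).
  by clear -sum_e e3d; lia.
exact: (unbalanced_parts_contra (ltnW g1) (ltnW g2) (ltnW g3) f1 f2 f3 c1 c2 c3
          hd a1 a2 a3 sum_e).
Qed.

Theorem proposition1p2 (r1 r2 r3 : nat) :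
  odd r1 -> odd r2 -> odd r3 ->
  r1 != r2 -> r1 != r3 -> r2 != r3 ->
  (forall r, r \in [:: r1; r2; r3] ->
     r \notin [:: 1; (r1 + r2 + r3)./2; uphalf (r1 + r2 + r3)]) ->
  forall H : rel 'I_(r1 + r2 + r3),
    is_bisection (K3 r1 r2 r3) H ->
    exists v : 'I_(r1 + r2 + r3),
      (deg H v).*2 + 1 < deg (K3 r1 r2 r3) v.
Proof.
move=> o1 o2 o3 d12 d13 d23 excluded H [sub_H [_ [A [leA [leCA sep_A]]]]].
case: (pickP (fun v => (deg H v).*2 + 1 < deg (K3 r1 r2 r3) v)) => [v large|small].
  by exists v.
exfalso.
have deg_H_large v : deg (K3 r1 r2 r3) v <= (deg H v).*2 + 1.
  by rewrite leqNgt small.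
have odd_n : odd (r1 + r2 + r3) by rewrite !oddD o1 o2 o3.
have [c1 c2 c3] := card_part_sets r1 r2 r3.
have parts i := part_excess_cases sub_H deg_H_large (i := i) sep_A odd_n.
have := parts 0; rewrite c1 => /(_ o1) h1.
have := parts 1; rewrite c2 => /(_ o2) h2.
have := parts 2; rewrite c3 => /(_ o3) h3.
have d_unit : (excess A [set: _] = 1 \/ excess A [set: _] = -1)%R.
  by apply: excess_setT_odd; rewrite ?card_ord.
apply: (no_excess_decomposition o1 o2 o3 d12 d13 d23 _ _ _ d_unit h1 h2 h3).
- by apply: excluded; rewrite !inE eqxx.
- by apply: excluded; rewrite !inE eqxx orbT.
- by apply: excluded; rewrite !inE eqxx !orbT.
by rewrite excess_split_parts.
Qed.
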